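(* Let $X$ be an $n$-dimensional projective space over a field, $-1\le t\le s\le n$, and let $K$ be a $k$-dimensional subspace of $X$ with $-1\le k\le n-s-1$. For every integer $-1\le d\le\min\{k,s\}$, suppose integers $t_1(d),s_1(d),t_2(d),s_2(d)$ satisfy $-1\le t_1(d)\le s_1(d)=d$, $-1\le t_2(d)\le s_2(d)$, $t_1(d)+t_2(d)+1=t$ and $s_1(d)+s_2(d)+1=s$, and choose a set $\mathcal B_K(d)\subseteq\mathrm{Gr}_{t_1(d)}(K)$ blocking $\mathrm{Gr}_{s_1(d)}(K)$ and a set $\mathcal B_{X/K}(d)\subseteq\mathrm{Gr}_{t_2(d)}(X/K)$ blocking $\mathrm{Gr}_{s_2(d)}(X/K)$. Then $\mathcal B:=\bigcup_{d=-1}^{\min\{k,s\}}\mathcal B(d)$ is an $(s,t)$-blocking set in $X$, where $$\mathcal B(d):=\{T\in\mathrm{Gr}_t(X): K\cap T\in\mathcal B_K(d),\ \langle K,T\rangle\in\mathcal B_{X/K}(d)\}.$$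
   Context: Projective dimension is used (empty subspace has dimension $-1$); $\mathrm{Gr}_d(Y)$ is the set of $d$-dimensional subspaces of $Y$. For a $k$-dimensional subspace $K$ of $X$, the quotient space $X/K$ is the projective space of dimension $\dim X-k-1$ whose $r$-dimensional subspaces are the $(r+k+1)$-dimensional subspaces of $X$ containing $K$; the span $\langle K,T\rangle$ is regarded as an element of $X/K$. A set $\mathcal B$ of $t$-dimensional subspaces blocks a set $\mathcal S$ of $s$-dimensional subspaces if every member of $\mathcal S$ contains a member of $\mathcal B$; an $(s,t)$-blocking set in $X$ is a subset of $\mathrm{Gr}_t(X)$ blocking $\mathrm{Gr}_s(X)$. *)

From HB Require Import structures.
From mathcomp Require Import all_boot all_order all_algebra.
Set Implicit Arguments. Unset Strict Implicit. Unset Printing Implicit Defensive.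
Import Order.TTheory GRing.Theory Num.Theory.
Local Open Scope ring_scope.

(* The projective space X is the lattice of subspaces of a finite-dimensional
   vector space V over a field F; X has projective dimension \dim V - 1. *)
Section Proj.
Variables (F : fieldType) (V : vectType F).

Definition pdim (U : {vspace V}) : int := (Posz (\dim U)) - 1.

Definition Gr (d : int) (Y : {vspace V}) : {vspace V} -> Prop :=
  fun U => (U <= Y)%VS /\ pdim U = d.

(* Gr_r(X/K): the r-dimensional subspaces of the quotient X/K, i.e. the
   (r+k+1)-dimensional subspaces of X containing K (k = pdim K). *)
Definition GrQ (K : {vspace V}) (r : int) : {vspace V} -> Prop :=
  fun U => (K <= U)%VS /\ pdim U = r + pdim K + 1.

Definition blocks (B S : {vspace V} -> Prop) : Prop :=
  forall S0, S S0 -> exists T, B T /\ (T <= S0)%VS.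
End Proj.

From HB Require Import structures.
From mathcomp Require Import all_boot all_order all_algebra.
From mathcomp Require Import zify.
Import Order.TTheory GRing.Theory Num.Theory.
Local Open Scope ring_scope.

(* Let S be an s-space and d := pdim (K :&: S).  Then K :&: S is a d-space of
   K and K + S an s2(d)-space of X/K, so they contain blocking elements T1 and
   T2.  Every pair T1 <= K :&: S, K <= T2 <= K + S is of the form
   (K :&: T, K + T) for some T <= S: by the modular law, T1 plus a complement
   of K in T2 :&: S will do.  By Grassmann's formula this T is a t-space,
   hence lies in B(d). *)

Section Subspaces.
Set Implicit Arguments.
Context {F : fieldType} {V : vectType F}.
Implicit Types K S T U W : {vspace V}.

Lemma capv_addv_modular K S (T2 : {vspace V}) :
  (K <= T2)%VS -> (T2 :&: (K + S) = K + T2 :&: S)%VS.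
Proof.
move=> sKT2; apply/eqP; rewrite eqEsubv subv_add subv_cap sKT2 addvSl.
rewrite (capvS (subvv T2) (addvSr K S)) !andbT.
apply/subvP=> v /memv_capP[T2v /memv_addP[x Kx [y Sy def_v]]].
rewrite def_v in T2v *.
rewrite memv_add // memv_cap Sy andbT.
by rewrite -[y](addKr x) rpredD ?rpredN //; apply: (subvP sKT2).
Qed.

Lemma capv_addv_onto K S (T1 T2 : {vspace V}) :
  (T1 <= K :&: S)%VS -> (K <= T2)%VS -> (T2 <= K + S)%VS ->
  exists2 T, (T <= S)%VS & (K :&: T = T1)%VS /\ (K + T = T2)%VS.
Proof.
move=> sT1KS sKT2 sT2KS; rewrite subv_cap in sT1KS; case/andP: sT1KS => sT1K sT1S.
pose C := ((T2 :&: S) :\: K)%VS.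
have CK0 : (C :&: K = 0)%VS := capv_diff _ _.
have sCS : (C <= S)%VS := subv_trans (diffvSl _ _) (capvSr _ _).
have KC : (K + C = T2)%VS.
  by rewrite addvC addv_diff addvC -capv_addv_modular // (capv_idPl sT2KS).
have KT : (K + (T1 + C) = T2)%VS by rewrite addvA (addv_idPl sT1K).
exists (T1 + C)%VS; first by rewrite subv_add sT1S.
split=> //; apply/eqP; rewrite eq_sym eqEdim subv_cap sT1K addvSl /=.
have T1C0 : (T1 :&: C = 0)%VS.
  by apply/eqP; rewrite -subv0 -CK0 capvC capvS.
have := dimv_sum_cap K (T1 + C); rewrite KT dimv_disjoint_sum //.
rewrite -KC dimv_disjoint_sum; last by rewrite capvC.
lia.
Qed.

Lemma pdim_ge U : -1 <= pdim U.
Proof. rewrite /pdim; lia. Qed.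

Lemma pdimS U W : (U <= W)%VS -> pdim U <= pdim W.
Proof. by move/dimvS; rewrite /pdim; lia. Qed.

Lemma pdim_cap_add U W : pdim (U :&: W) + pdim (U + W) = pdim U + pdim W.
Proof. by have := dimv_sum_cap U W; rewrite /pdim; lia. Qed.

End Subspaces.

Theorem corollary3p7 (F : fieldType) (V : vectType F)
  (n t s k : int) (K : {vspace V})
  (t1 s1 t2 s2 : int -> int)
  (BK BXK : int -> {vspace V} -> Prop) :
  pdim (fullv : {vspace V}) = n ->
  -1 <= t -> t <= s -> s <= n ->
  pdim K = k -> -1 <= k -> k <= n - s - 1 ->
  (forall d : int, -1 <= d -> d <= k -> d <= s ->
     [/\ -1 <= t1 d, t1 d <= s1 d, s1 d = d, -1 <= t2 d & t2 d <= s2 d] /\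
     t1 d + t2 d + 1 = t /\ s1 d + s2 d + 1 = s /\
     (forall U, BK d U -> Gr (t1 d) K U) /\ blocks (BK d) (Gr (s1 d) K) /\
     (forall U, BXK d U -> GrQ K (t2 d) U) /\ blocks (BXK d) (GrQ K (s2 d))) ->
  let Bd := fun (d : int) (T : {vspace V}) =>
    Gr t fullv T /\ BK d (K :&: T)%VS /\ BXK d (K + T)%VS in
  let B := fun T : {vspace V} =>
    exists d : int, [/\ -1 <= d, d <= k, d <= s & Bd d T] in
  (forall T, B T -> Gr t fullv T) /\ blocks B (Gr s fullv).
Proof.
move=> _ _ _ _ pdimK _ _ hyp Bd B.
split=> [T [d [_ _ _ []]] //|S [_ pdimS_eq]].
pose d := pdim (K :&: S).
have d_ge : -1 <= d := pdim_ge _.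
have d_le_k : d <= k by rewrite -pdimK pdimS ?capvSl.
have d_le_s : d <= s by rewrite -pdimS_eq pdimS ?capvSr.
have dKS := pdim_cap_add K S.
have [[_ _ s1d _ _] [t12 [s12 [BKt [BKbl [BXKt BXKbl]]]]]] := hyp d d_ge d_le_k d_le_s.
have [T1 [BT1 sT1]] : exists T1, BK d T1 /\ (T1 <= K :&: S)%VS.
  by apply: BKbl; split; [exact: capvSl | rewrite s1d].
have [T2 [BT2 sT2]] : exists T2, BXK d T2 /\ (T2 <= K + S)%VS.
  by apply: BXKbl; split; [exact: addvSl | lia].
have [[_ pdimT1] [sKT2 pdimT2]] := (BKt _ BT1, BXKt _ BT2).
have [T sTS [KT1 KT2]] := capv_addv_onto sT1 sKT2 sT2.
exists T; split=> //; exists d; split=> //; split; last by rewrite KT1 KT2.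
split; first exact: subvf.
by have := pdim_cap_add K T; rewrite KT1 KT2; lia.
Qed.
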